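(* For each $n\ge1$ there is a bijection $\varphi$ from the set of plane trees with $n$ edges to $\mathfrak S_n(321)$ such that, for every such tree $T$ and $\pi=\varphi(T)$: (1) the number of young leaves of $T$ equals the number of indices $i\in\{1,\dots,n-1\}$ such that both $\pi_i$ and $\pi_{i+1}$ are weak excedances of $\pi$; (2) the number of old leaves of $T$ equals the number of weak excedances $\pi_i$ of $\pi$ that are not followed by another weak excedance (i.e. $i=n$, or $\pi_{i+1}$ is not a weak excedance).
   Context: A plane tree is a rooted tree in which the children of each vertex are linearly ordered. A leaf is a vertex with no children; the one-vertex tree has no leaves. A leaf is old if it is the leftmost child of its parent, young otherwise. $\mathfrak S_n(321)$ is the set of permutations $\pi=\pi_1\cdots\pi_n$ of $\{1,\dots,n\}$ having no indices $a<b<c$ with $\pi_a>\pi_b>\pi_c$. An entry $\pi_i$ is a weak excedance if $\pi_i\ge i$ and a deficiency if $\pi_i<i$. *)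

From mathcomp Require Import all_boot all_order all_fingroup.
Set Implicit Arguments. Unset Strict Implicit. Unset Printing Implicit Defensive.

Inductive ptree : Type := Node of seq ptree.

Fixpoint edges (t : ptree) : nat :=
  let: Node cs := t in
  (fix go (l : seq ptree) : nat :=
     match l with [::] => 0 | c :: l' => (edges c).+1 + go l' end) cs.

Definition is_leaf (t : ptree) : bool := if t is Node [::] then true else false.

(* old leaves: leaves that are the leftmost child of their parent
   (the root is never a leaf, since it has no parent / one-vertex tree has no leaves) *)
Fixpoint old_leaves (t : ptree) : nat :=
  let: Node cs := t in
  (if cs is c :: _ then is_leaf c else false) +
  (fix go (l : seq ptree) : nat :=
     match l with [::] => 0 | c :: l' => old_leaves c + go l' end) cs.

Fixpoint young_leaves (t : ptree) : nat :=
  let: Node cs := t in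
  count is_leaf (behead cs) +
  (fix go (l : seq ptree) : nat :=
     match l with [::] => 0 | c :: l' => young_leaves c + go l' end) cs.

(* 321-avoiding permutations of {0,...,n-1} (0-indexed version of {1..n}) *)
Definition avoids321 n (p : 'S_n) : bool :=
  [forall a : 'I_n, forall b : 'I_n, forall c : 'I_n,
     ((a < b) && (b < c)) ==> ~~ ((p c < p b) && (p b < p a))].

(* position i (0-indexed) carries a weak excedance: p i >= i
   (equivalent to pi_{i+1} >= i+1 in 1-indexed notation); false if i >= n *)
Definition wexc n (p : 'S_n) (i : nat) : bool :=
  [exists j : 'I_n, (val j == i) && (i <= p j)].

Definition wexc_pairs n (p : 'S_n) : nat :=
  count (fun i => wexc p i && wexc p i.+1) (iota 0 n.-1).

Definition wexc_ends n (p : 'S_n) : nat :=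
  count (fun i => wexc p i && ~~ wexc p i.+1) (iota 0 n).

(* Encode a plane tree by its Dyck word, listing the children of every vertex from right
   to left: each edge contributes an up step and, after the word of the subtree below it,
   a down step. Reading the path, each down step emits one value: a down step ending a
   peak emits the number of up steps read so far minus one (a new left-to-right maximum),
   any other down step emits the least value not emitted yet. This is the classical
   bijection between Dyck paths and 321-avoiding permutations: the inverse rebuilds the path
   from the left-to-right maxima, and avoiding 321 is exactly what forces every other
   entry to be the least value still missing.
   Position i is then a weak excedance iff the i-th down step ends a peak, i.e. iff its edge
   leads to a leaf. Because of the right-to-left order, the down step following that of a
   young leaf lies in the subtree of its left sibling and ends a peak, while the one
   following an old leaf (if any) closes the edge to its parent and ends no peak. *)

From mathcomp Require Import all_boot all_order all_fingroup.
From mathcomp Require Import zify.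
Set Implicit Arguments. Unset Strict Implicit. Unset Printing Implicit Defensive.

Definition children (t : ptree) : seq ptree := let: Node cs := t in cs.

Definition forest_ind (Q : seq ptree -> Prop) (Q0 : Q [::])
    (QS : forall cs' cs, Q cs' -> Q cs -> Q (Node cs' :: cs)) : forall cs, Q cs :=
  fun cs => (fix tree (t : ptree) : Q (children t) :=
    let: Node cs := t in
    (fix forest (l : seq ptree) : Q l :=
       match l with
       | [::] => Q0
       | c :: l' =>
         match c as c0 return Q (children c0) -> Q (c0 :: l') with
         | Node cs' => fun Qc => QS cs' l' Qc (forest l')
         end (tree c)
       end) cs) (Node cs).

Fixpoint dyck_word (t : ptree) : seq bool :=
  let: Node cs := t in
  (fix go (l : seq ptree) : seq bool :=
     match l with [::] => [::] | c :: l' => go l' ++ true :: dyck_word c ++ [:: false] end) cs.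

Arguments dyck_word : simpl never.

Lemma dyck_word_cons c cs :
  dyck_word (Node (c :: cs)) = dyck_word (Node cs) ++ true :: dyck_word c ++ [:: false].
Proof. by []. Qed.

Lemma edges_cons c cs : edges (Node (c :: cs)) = (edges c).+1 + edges (Node cs).
Proof. by []. Qed.

Definition head_leaf (cs : seq ptree) : bool := if cs is c :: _ then is_leaf c else false.

Lemma young_leaves_cons c cs :
  young_leaves (Node (c :: cs)) = young_leaves c + young_leaves (Node cs) + head_leaf cs.
Proof. by case: cs => [|c' cs] /=; lia. Qed.

Lemma old_leaves_cons c cs :
  old_leaves (Node (c :: cs)) + head_leaf cs = is_leaf c + old_leaves c + old_leaves (Node cs).
Proof. by case: cs => [|c' cs] /=; lia. Qed.

Lemma count_dyck_word t :
  count id (dyck_word t) = edges t /\ count negb (dyck_word t) = edges t.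
Proof.
case: t => cs; elim/forest_ind: cs => [//|cs' cs [up' down'] [up down]].
rewrite dyck_word_cons edges_cons !count_cat /= !count_cat up' down' up down.
by rewrite /=; lia.
Qed.

Fixpoint dyck_from (k : nat) (w : seq bool) : bool :=
  match w with
  | [::] => true
  | true :: w' => dyck_from k.+1 w'
  | false :: w' => (0 < k) && dyck_from k.-1 w'
  end.

Lemma dyck_from_word_cat t k w : dyck_from k (dyck_word t ++ w) = dyck_from k w.
Proof.
case: t => cs; elim/forest_ind: cs k w => [//|cs' cs IH' IH] k w.
by rewrite dyck_word_cons -catA IH /= -catA IH'.
Qed.

Lemma dyck_from_word t : dyck_from 0 (dyck_word t).
Proof. by have := dyck_from_word_cat t 0 [::]; rewrite cats0. Qed.

Fixpoint parse (st : seq (seq ptree)) (w : seq bool) : seq (seq ptree) :=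
  match w with
  | [::] => st
  | true :: w' => parse ([::] :: st) w'
  | false :: w' =>
    if st is f0 :: f1 :: st' then parse ((Node f0 :: f1) :: st') w' else parse st w'
  end.

Fixpoint unparse (st : seq (seq ptree)) : seq bool :=
  match st with
  | [::] => [::]
  | [:: f] => dyck_word (Node f)
  | f :: st' => unparse st' ++ true :: dyck_word (Node f)
  end.

Lemma parse_word_cat cs f st w :
  parse (f :: st) (dyck_word (Node cs) ++ w) = parse ((cs ++ f) :: st) w.
Proof.
elim/forest_ind: cs f st w => [//|cs' cs IH' IH] f st w.
by rewrite dyck_word_cons -catA IH /= -catA IH' cats0.
Qed.

Lemma dyck_word_inj : injective dyck_word.
Proof.
move=> [cs1] [cs2] E.
have := parse_word_cat cs1 [::] [::] [::]; rewrite E parse_word_cat !cats0.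
by case=> ->.
Qed.

Lemma unparse_parse w st : st <> [::] -> dyck_from (size st).-1 w ->
  unparse (parse st w) = unparse st ++ w /\
  size (parse st w) + count negb w = size st + count id w.
Proof.
elim: w st => [|[] w IH] st st0 /=; first by rewrite cats0 addn0.
  case: st st0 => // f st _ ok_w.
  have [|-> ->] := IH ([::] :: f :: st) _ ok_w; first by [].
  by split; [rewrite -catA | rewrite /=; lia].
case: st st0 => [//|f0 [|f1 st]] _ // /andP[_ ok_w].
have [|-> size_st] := IH ((Node f0 :: f1) :: st) _ ok_w; first by [].
split; last by rewrite /= in size_st *; lia.
case: st {ok_w size_st} => [|f st] /=; rewrite dyck_word_cons;
  by do ![rewrite -catA | rewrite cat_cons].
Qed.

Lemma dyck_word_onto w : dyck_from 0 w -> count id w = count negb w ->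
  exists t, dyck_word t = w.
Proof.
move=> ok_w balanced; have [//|] := @unparse_parse w [:: [::]] _ ok_w.
case: (parse _ w) => [|f [|f' st]] /=; try lia.
by move=> word_f _; exists (Node f).
Qed.

Fixpoint peak_flags (f : bool) (w : seq bool) : seq bool :=
  match w with
  | [::] => [::]
  | true :: w' => peak_flags true w'
  | false :: w' => f :: peak_flags false w'
  end.

Lemma peak_flags_cat f w1 w2 :
  peak_flags f (w1 ++ w2) = peak_flags f w1 ++ peak_flags (last f w1) w2.
Proof. by elim: w1 f => [|[] w1 IH] f //=; rewrite IH. Qed.

Lemma head_peak_flags_rcons_down w : head false (peak_flags true (w ++ [:: false])) = true.
Proof. by elim: w => [|[] w IH]. Qed.

Definition leaf_flags (t : ptree) : seq bool := peak_flags true (dyck_word t).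

Lemma peak_flags_word f t : peak_flags f (dyck_word t) = leaf_flags t.
Proof.
case: t => cs; elim: cs => [//|c cs IH].
by rewrite /leaf_flags dyck_word_cons !peak_flags_cat IH.
Qed.

Lemma last_dyck_word t : last true (dyck_word t) = is_leaf t.
Proof. by case: t => [[|c cs]] //; rewrite dyck_word_cons last_cat /= last_cat. Qed.

Lemma peak_flags_planted c :
  peak_flags true (dyck_word c ++ [:: false]) = rcons (leaf_flags c) (is_leaf c).
Proof. by rewrite peak_flags_cat last_dyck_word cats1. Qed.

Lemma leaf_flags_cons c cs :
  leaf_flags (Node (c :: cs)) = leaf_flags (Node cs) ++ rcons (leaf_flags c) (is_leaf c).
Proof. by rewrite /leaf_flags dyck_word_cons peak_flags_cat /= peak_flags_planted. Qed.

Lemma head_rcons_leaf_flags c : head false (rcons (leaf_flags c) (is_leaf c)) = true.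
Proof. by rewrite -peak_flags_planted head_peak_flags_rcons_down. Qed.

Lemma last_leaf_flags cs : last false (leaf_flags (Node cs)) = head_leaf cs.
Proof. by case: cs => [//|c cs]; rewrite leaf_flags_cons last_cat last_rcons. Qed.

Fixpoint true_pairs (l : seq bool) : nat :=
  if l is b :: l' then (b && head false l') + true_pairs l' else 0.

Fixpoint true_ends (l : seq bool) : nat :=
  if l is b :: l' then (b && ~~ head false l') + true_ends l' else 0.

Lemma true_pairs_cat l1 l2 :
  true_pairs (l1 ++ l2) = true_pairs l1 + true_pairs l2 + (last false l1 && head false l2).
Proof.
elim: l1 => [|b [|b' l1] IH] /=; first by rewrite addn0.
  by case: b; lia.
by move: IH => /=; lia.
Qed.

Lemma true_ends_cat l1 l2 :
  true_ends (l1 ++ l2) + (last false l1 && head false l2) = true_ends l1 + true_ends l2.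
Proof.
elim: l1 => [|b [|b' l1] IH] /=; first by rewrite addn0.
  by case: b; case: l2 {IH} => [|[] l2] /=; lia.
by move: IH => /=; lia.
Qed.

Lemma true_pairs_rcons l b : true_pairs (rcons l b) = true_pairs l + (last false l && b).
Proof. by rewrite -cats1 true_pairs_cat /=; case: b; rewrite ?andbT ?andbF; lia. Qed.

Lemma true_ends_rcons l b : true_ends (rcons l b) + (last false l && b) = true_ends l + b.
Proof. by rewrite -cats1 true_ends_cat /=; case: b; rewrite ?andbT ?andbF; lia. Qed.

Lemma leaf_stats t :
  true_pairs (leaf_flags t) = young_leaves t /\ true_ends (leaf_flags t) = old_leaves t.
Proof.
case: t => cs; elim/forest_ind: cs => [//|cs' cs [young' old'] [young old]].
have no_pair : head_leaf cs' && is_leaf (Node cs') = false.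
  by clear young' old'; case: cs' => // c l; rewrite andbF.
rewrite leaf_flags_cons; split.
  rewrite true_pairs_cat true_pairs_rcons head_rcons_leaf_flags !last_leaf_flags no_pair.
  by rewrite young' young young_leaves_cons andbT; lia.
have := true_ends_rcons (leaf_flags (Node cs')) (is_leaf (Node cs')).
have := true_ends_cat (leaf_flags (Node cs))
  (rcons (leaf_flags (Node cs')) (is_leaf (Node cs'))).
have := old_leaves_cons (Node cs') cs.
rewrite head_rcons_leaf_flags !last_leaf_flags no_pair old' old andbT; lia.
Qed.

Definition mex (s : seq nat) : nat := find (fun k => k \notin s) (iota 0 (size s).+1).

Lemma has_notin_iota (s : seq nat) : has (fun k => k \notin s) (iota 0 (size s).+1).
Proof.
apply/hasPn => all_in.
have /(uniq_leq_size (iota_uniq 0 _)) : {subset iota 0 (size s).+1 <= s}.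
  by move=> k /all_in; rewrite negbK.
by rewrite size_iota ltnn.
Qed.

Lemma mex_le_size (s : seq nat) : mex s <= size s.
Proof. by have := has_notin_iota s; rewrite has_find size_iota ltnS. Qed.

Lemma mex_notin (s : seq nat) : mex s \notin s.
Proof.
by have := nth_find 0 (has_notin_iota s); rewrite nth_iota // ltnS; apply: mex_le_size.
Qed.

Lemma mem_lt_mex (s : seq nat) k : k < mex s -> k \in s.
Proof.
move=> lt_k; have := before_find 0 lt_k.
rewrite nth_iota => [/negbFE //|].
by rewrite ltnS (leq_trans (ltnW lt_k)) ?mex_le_size.
Qed.

Lemma mex_eq (s : seq nat) x : x \notin s -> {subset iota 0 x <= s} -> mex s = x.
Proof.
move=> x_notin sub_x; apply/eqP; rewrite eqn_leq.
apply/andP; split; rewrite leqNgt; apply/negP; first by move/mem_lt_mex; apply/negP.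
by move=> lt_mex; move: (mex_notin s); rewrite sub_x // mem_iota.
Qed.

Definition lsub (s : seq nat) : nat := foldr (fun x n => maxn x.+1 n) 0 s.

Lemma lsub_cons x s : lsub (x :: s) = maxn x.+1 (lsub s).
Proof. by []. Qed.

Lemma lsub_rcons (s : seq nat) x : lsub (rcons s x) = maxn (lsub s) x.+1.
Proof. by elim: s => [|y s IH]; rewrite ?rcons_cons lsub_cons ?IH /=; lia. Qed.

Lemma lt_lsub (s : seq nat) x : x \in s -> x < lsub s.
Proof. by elim: s => [//|y s IH]; rewrite in_cons lsub_cons => /orP[/eqP->|/IH]; lia. Qed.

Lemma lsub_le (s : seq nat) n : all (fun x => x < n) s -> lsub s <= n.
Proof. by elim: s => [//|y s IH]; rewrite lsub_cons => /andP[? /IH]; lia. Qed.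

Lemma pred_lsub_in (s : seq nat) : 0 < lsub s -> (lsub s).-1 \in s.
Proof.
elim: s => [//|y s IH]; rewrite lsub_cons in_cons => _.
by case: (leqP y.+1 (lsub s)) => ?; [rewrite IH ?orbT; lia | rewrite eqxx].
Qed.

Lemma size_le_lsub (s : seq nat) : uniq s -> size s <= lsub s.
Proof.
move=> uniq_s; have /(uniq_leq_size uniq_s) : {subset s <= iota 0 (lsub s)}.
  by move=> x /lt_lsub; rewrite mem_iota.
by rewrite size_iota.
Qed.

Lemma lsub_full (s : seq nat) : uniq s -> all (fun x => x < size s) s -> lsub s = size s.
Proof. by move=> uniq_s all_lt; apply/eqP; rewrite eqn_leq lsub_le ?size_le_lsub. Qed.

Lemma mem_full (s : seq nat) y :
  uniq s -> all (fun x => x < size s) s -> y < size s -> y \in s.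
Proof.
move=> uniq_s all_lt lt_y; have sub_s : {subset s <= iota 0 (size s)}.
  by move=> x x_s; rewrite mem_iota (allP all_lt).
have [|_ ->] := uniq_min_size uniq_s sub_s; first by rewrite size_iota.
by rewrite mem_iota.
Qed.

Lemma mex_lt_size (s : seq nat) : uniq s -> size s < lsub s -> mex s < size s.
Proof.
move=> uniq_s lt_size; rewrite ltn_neqAle mex_le_size andbT; apply/eqP => mex_size.
have sub_s : {subset iota 0 (size s) <= s}.
  by move=> y; rewrite mem_iota -mex_size => /mem_lt_mex.
have [|_ eq_s] := uniq_min_size (iota_uniq 0 _) sub_s; first by rewrite size_iota.
suff : lsub s <= size s by rewrite leqNgt lt_size.
by apply: lsub_le; apply/allP => x; rewrite -eq_s mem_iota.
Qed.

Definition next_value (n : nat) (f : bool) (pre : seq nat) : nat :=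
  if f then n.-1 else mex pre.

Fixpoint seq_of_dyck (n : nat) (f : bool) (pre : seq nat) (w : seq bool) : seq nat :=
  match w with
  | [::] => [::]
  | true :: w' => seq_of_dyck n.+1 true pre w'
  | false :: w' =>
    next_value n f pre :: seq_of_dyck n false (rcons pre (next_value n f pre)) w'
  end.

Fixpoint dyck_of_seq (n : nat) (s : seq nat) : seq bool :=
  if s is x :: s' then nseq (x.+1 - n) true ++ false :: dyck_of_seq (maxn n x.+1) s'
  else [::].

Fixpoint wexc_flags (pre s : seq nat) : seq bool :=
  if s is v :: s' then (size pre <= v) :: wexc_flags (rcons pre v) s' else [::].

Fixpoint lrmax_or_mex (pre s : seq nat) : bool :=
  if s is v :: s' then
    (all (fun x => x < v) pre || all (fun y => y \in pre) (iota 0 v)) &&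
    lrmax_or_mex (rcons pre v) s'
  else true.

Definition avoids321_seq (s : seq nat) : Prop :=
  forall a b c, a < b -> b < c -> c < size s ->
  ~~ ((nth 0 s c < nth 0 s b) && (nth 0 s b < nth 0 s a)).

Lemma next_value_spec n f (pre : seq nat) :
  uniq pre -> (if f then lsub pre < n else lsub pre == n) -> size pre < n ->
  let v := next_value n f pre in
  [/\ v \notin pre, lsub (rcons pre v) = n, (size pre <= v) = f &
      all (fun x => x < v) pre || all (fun y => y \in pre) (iota 0 v)].
Proof.
move=> uniq_pre + lt_size; have le_size := size_le_lsub uniq_pre.
rewrite /next_value lsub_rcons; case: f => [lt_n | /eqP eq_n].
  split; try lia; first by apply/negP => /lt_lsub; lia.
  by apply/orP; left; apply/allP => x /lt_lsub; lia.
have le_mex := mex_le_size pre; split; [exact: mex_notin | lia | |].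
  by apply/negbTE; rewrite -ltnNge mex_lt_size // eq_n.
by apply/orP; right; apply/allP => y; rewrite mem_iota => /mem_lt_mex.
Qed.

Lemma seq_of_dyck_spec w n f (pre : seq nat) :
  uniq pre -> (if f then lsub pre < n else lsub pre == n) ->
  dyck_from (n - size pre) w -> n + count id w = size pre + count negb w ->
  let s := seq_of_dyck n f pre w in
  [/\ uniq (pre ++ s), all (fun x => x < n + count id w) s, lrmax_or_mex pre s,
      wexc_flags pre s = peak_flags f w &
      dyck_of_seq (lsub pre) s = nseq (n - lsub pre) true ++ w].
Proof.
elim: w n f pre => [|[] w IH] n f pre uniq_pre lsub_pre /=.
- rewrite addn0 !cats0 => _ n_size; split=> //.
  have := size_le_lsub uniq_pre; case: f lsub_pre => [? ?|/eqP -> _]; last by rewrite subnn.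
  by exfalso; lia.
- have le_n : lsub pre <= n by case: f lsub_pre => [/ltnW|/eqP ->].
  have le_size : size pre <= n := leq_trans (size_le_lsub uniq_pre) le_n.
  rewrite -subSn // => dyck_w balance.
  have balance' : n.+1 + count id w = size pre + count negb w by lia.
  have [|uniq_s all_s lr_s -> ->] := IH n.+1 true pre uniq_pre _ dyck_w balance'.
    by rewrite ltnS.
  by split=> //; rewrite ?addnS // subSn // -addn1 nseqD -catA.
move=> /andP[lt_size dyck_w] balance.
have lt_n : size pre < n by rewrite -subn_gt0.
have [notin_v lsub_v wexc_v lr_v] := next_value_spec uniq_pre lsub_pre lt_n.
set v := next_value n f pre in notin_v lsub_v wexc_v lr_v *.
have balance' : n + count id w = size (rcons pre v) + count negb w.
  by rewrite size_rcons; lia.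
have := IH n false (rcons pre v) _ _ _ balance'.
rewrite rcons_uniq notin_v lsub_v eqxx size_rcons subnS.
case=> // uniq_s all_s lr_s wexc_s dyck_s.
split.
- by rewrite -cat_rcons.
- by rewrite /= all_s andbT add0n ltn_addr // -lsub_v lt_lsub // mem_rcons mem_head.
- by rewrite lr_s lr_v.
- by rewrite wexc_s wexc_v.
- rewrite -lsub_rcons lsub_v dyck_s subnn; congr (nseq _ _ ++ _).
  by move: lsub_v; rewrite lsub_rcons; lia.
Qed.

Lemma size_seq_of_dyck w n f pre : size (seq_of_dyck n f pre w) = count negb w.
Proof. by elim: w n f pre => [|[] w IH] n f pre //=; rewrite IH. Qed.

Lemma seq_of_dyck_nseq k n f pre w :
  seq_of_dyck n f pre (nseq k true ++ w) = seq_of_dyck (n + k) (f || (0 < k)) pre w.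
Proof.
elim: k n f => [|k IH] n f; first by rewrite addn0 orbF.
by rewrite /= IH addSnnS orbT.
Qed.

Lemma avoids321_mid (s1 s2 : seq nat) x y z : avoids321_seq (s1 ++ x :: s2) ->
  y \in s1 -> z \in s2 -> ~~ ((z < x) && (x < y)).
Proof.
move=> avoid_s y_s1 z_s2.
have lt_y : index y s1 < size s1 by rewrite index_mem.
have lt_z : index z s2 < size s2 by rewrite index_mem.
set u := s1 ++ x :: s2 in avoid_s.
have nth_y : nth 0 u (index y s1) = y by rewrite nth_cat lt_y nth_index.
have nth_x : nth 0 u (size s1) = x by rewrite nth_cat ltnn subnn.
have nth_z : nth 0 u (size s1 + (index z s2).+1) = z.
  by rewrite nth_cat ltnNge leq_addr addKn /= nth_index.
have := avoid_s (index y s1) (size s1) (size s1 + (index z s2).+1) lt_y.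
by rewrite nth_y nth_x nth_z size_cat /=; apply; lia.
Qed.

Lemma mex_avoids321 (pre s : seq nat) x : let u := pre ++ x :: s in
  uniq u -> all (fun z => z < size u) u -> avoids321_seq u -> x < lsub pre -> mex pre = x.
Proof.
move=> u uniq_u all_u avoid_u lt_x.
have x_notin : x \notin pre.
  by move: uniq_u; rewrite cat_uniq => /and3P[_ /hasPn/(_ x (mem_head x s)) ? _].
have top_in : (lsub pre).-1 \in pre by apply: pred_lsub_in; lia.
have lt_top : x < (lsub pre).-1.
  rewrite ltn_neqAle -ltnS prednK ?lt_x ?andbT; last lia.
  by apply: contraNneq x_notin => ->.
apply: mex_eq => // y; rewrite mem_iota /= => lt_y.
have : y \in u.
  apply: mem_full => //; rewrite (leq_trans lt_y) // ltnW // (allP all_u) //.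
  by rewrite mem_cat mem_head orbT.
rewrite mem_cat in_cons => /or3P[// | /eqP y_x | y_s]; first by lia.
by have := avoids321_mid avoid_u top_in y_s; rewrite lt_y lt_top.
Qed.

Lemma seq_of_dyckK (pre s : seq nat) : let u := pre ++ s in
  uniq u -> all (fun z => z < size u) u -> avoids321_seq u ->
  seq_of_dyck (lsub pre) false pre (dyck_of_seq (lsub pre) s) = s.
Proof.
elim: s pre => [//|x s IH] pre /= uniq_u all_u avoid_u.
rewrite seq_of_dyck_nseq.
have -> : lsub pre + (x.+1 - lsub pre) = lsub (rcons pre x) by rewrite lsub_rcons; lia.
rewrite /=.
have -> : next_value (lsub (rcons pre x)) (false || (0 < x.+1 - lsub pre)) pre = x.
  rewrite /next_value lsub_rcons subn_gt0 ltnS; case: leqP => [le_x|lt_x] /=; first lia.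
  exact: mex_avoids321 uniq_u all_u avoid_u lt_x.
by rewrite -lsub_rcons IH; rewrite ?cat_rcons.
Qed.

Lemma dyck_from_nseq j k w : dyck_from k (nseq j true ++ w) = dyck_from (k + j) w.
Proof. by elim: j k => [|j IH] k; rewrite ?addn0 // /= IH addSnnS. Qed.

Lemma dyck_from_dyck_of_seq (pre s : seq nat) :
  uniq (pre ++ s) -> dyck_from (lsub pre - size pre) (dyck_of_seq (lsub pre) s).
Proof.
elim: s pre => [//|x s IH] pre uniq_u.
have uniq_r : uniq (rcons pre x ++ s) by rewrite cat_rcons.
have uniq_x : uniq (rcons pre x) by move: uniq_r; rewrite cat_uniq => /andP[].
have le_x := size_le_lsub uniq_x; rewrite rcons_uniq in uniq_x.
have le_pre := size_le_lsub (proj2 (andP uniq_x)).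
have := IH _ uniq_r; rewrite lsub_rcons size_rcons in le_x * => dyck_s.
rewrite /= dyck_from_nseq /=; apply/andP; split; first lia.
by rewrite (_ : _.-1 = maxn (lsub pre) x.+1 - (size pre).+1) //; lia.
Qed.

Lemma count_dyck_of_seq (s : seq nat) n :
  n + count id (dyck_of_seq n s) = maxn n (lsub s) /\
  count negb (dyck_of_seq n s) = size s.
Proof.
elim: s n => [|x s IH] n; first by rewrite /= addn0 maxn0.
have [up down] := IH (maxn n x.+1).
by rewrite lsub_cons /= !count_cat !count_nseq /= down; split; lia.
Qed.

Lemma lrmax_or_mex_nth (pre s : seq nat) i : lrmax_or_mex pre s -> i < size s ->
  all (fun x => x < nth 0 s i) (pre ++ take i s) ||
  all (fun y => y \in pre ++ take i s) (iota 0 (nth 0 s i)).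
Proof.
elim: s pre i => [//|v s IH] pre [|i] /= /andP[lr_v lr_s] lt_i; first by rewrite cats0.
by rewrite -cat_rcons; apply: IH.
Qed.

Lemma lrmax_or_mex_avoids321 (s : seq nat) :
  uniq s -> lrmax_or_mex [::] s -> avoids321_seq s.
Proof.
move=> uniq_s lr_s a b c lt_ab lt_bc lt_c; apply/negP => /andP[lt_cb lt_ba].
have lt_b : b < size s := ltn_trans lt_bc lt_c.
have a_take : nth 0 s a \in take b s.
  by rewrite -(nth_take 0 lt_ab) mem_nth // size_take lt_b.
have c_drop : nth 0 s c \in drop b s.
  by rewrite -(subnKC (ltnW lt_bc)) -nth_drop mem_nth // size_drop ltn_sub2r.
case/orP: (lrmax_or_mex_nth lr_s lt_b) => /allP lr_b.
  by have := lr_b _ a_take; rewrite ltnNge ltnW.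
have c_take : nth 0 s c \in take b s by apply: lr_b; rewrite mem_iota.
move: uniq_s; rewrite -(cat_take_drop b s) cat_uniq => /and3P[_ /hasPn disjoint _].
by have := disjoint _ c_drop; rewrite c_take.
Qed.

Lemma size_wexc_flags (pre s : seq nat) : size (wexc_flags pre s) = size s.
Proof. by elim: s pre => [|v s IH] pre //=; rewrite IH. Qed.

Lemma nth_wexc_flags (pre s : seq nat) i :
  nth false (wexc_flags pre s) i = (i < size s) && (size pre + i <= nth 0 s i).
Proof.
elim: s pre i => [|v s IH] pre [|i] //=; first by rewrite addn0.
by rewrite IH size_rcons addSnnS.
Qed.

Lemma true_pairs_iota l :
  true_pairs l = count (fun i => nth false l i && nth false l i.+1) (iota 0 (size l).-1).
Proof.
elim: l => [//|b [|b' l] IH]; first by case: b.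
by rewrite /= in IH *; rewrite IH -[1]/(1 + 0) iotaDl count_map.
Qed.

Lemma true_ends_iota l :
  true_ends l = count (fun i => nth false l i && ~~ nth false l i.+1) (iota 0 (size l)).
Proof. by elim: l => [//|b l IH]; rewrite /= IH -[1]/(1 + 0) iotaDl count_map. Qed.

Definition seq_of_tree (t : ptree) : seq nat := seq_of_dyck 0 false [::] (dyck_word t).

Lemma size_seq_of_tree t : size (seq_of_tree t) = edges t.
Proof. by rewrite size_seq_of_dyck; case: (count_dyck_word t). Qed.

Lemma seq_of_tree_spec t : let s := seq_of_tree t in
  [/\ uniq s, all (fun x => x < edges t) s, lrmax_or_mex [::] s,
      wexc_flags [::] s = leaf_flags t & dyck_of_seq 0 s = dyck_word t].
Proof.
have [up down] := count_dyck_word t.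
have [] := @seq_of_dyck_spec (dyck_word t) 0 false [::] isT isT (dyck_from_word t).
  by rewrite up down.
by rewrite up peak_flags_word.
Qed.

Lemma seq_of_tree_inj : injective seq_of_tree.
Proof.
move=> t1 t2 eq_t; apply: dyck_word_inj.
have [_ _ _ _ <-] := seq_of_tree_spec t1.
by have [_ _ _ _ <-] := seq_of_tree_spec t2; rewrite eq_t.
Qed.

Lemma seq_of_tree_avoids321 t : avoids321_seq (seq_of_tree t).
Proof.
have [uniq_s _ lr_s _ _] := seq_of_tree_spec t.
exact: lrmax_or_mex_avoids321 uniq_s lr_s.
Qed.

Lemma seq_of_tree_onto (s : seq nat) :
  uniq s -> all (fun x => x < size s) s -> avoids321_seq s -> exists t, seq_of_tree t = s.
Proof.
move=> uniq_s all_s avoid_s.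
have [up down] := count_dyck_of_seq s 0.
have [t word_t] : exists t, dyck_word t = dyck_of_seq 0 s.
  apply: dyck_word_onto; first exact: (@dyck_from_dyck_of_seq [::]).
  by rewrite down -(lsub_full uniq_s all_s) -[lsub s]max0n -up.
by exists t; rewrite /seq_of_tree word_t (@seq_of_dyckK [::]).
Qed.

Section PermSeq.
Variable n : nat.

Definition perm_seq (p : 'S_n) : seq nat := [seq val (p i) | i <- enum 'I_n].

Lemma size_perm_seq p : size (perm_seq p) = n.
Proof. by rewrite size_map size_enum_ord. Qed.

Lemma nth_perm_seq p (i : 'I_n) : nth 0 (perm_seq p) i = p i.
Proof. by rewrite (nth_map i) ?size_enum_ord // nth_ord_enum. Qed.

Lemma perm_seq_uniq p : uniq (perm_seq p).
Proof. by rewrite map_inj_uniq ?enum_uniq // => i j /val_inj/perm_inj. Qed.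

Lemma perm_seq_lt p : all (fun x => x < n) (perm_seq p).
Proof. by apply/allP => _ /mapP[i _ ->]; apply: ltn_ord. Qed.

Lemma perm_seq_inj : injective perm_seq.
Proof.
move=> p1 p2 eq_p; apply/permP => i.
by have := congr1 (nth 0 ^~ i) eq_p; rewrite /= !nth_perm_seq => /val_inj.
Qed.

Lemma perm_seq_onto (s : seq nat) :
  uniq s -> size s = n -> all (fun x => x < n) s -> exists p : 'S_n, perm_seq p = s.
Proof.
move=> uniq_s size_s all_s.
have lt_s (i : 'I_n) : nth 0 s i < n by apply: (allP all_s); rewrite mem_nth ?size_s.
pose f (i : 'I_n) := Ordinal (lt_s i).
have inj_f : injective f.
  move=> i j /(congr1 val) /= /eqP; rewrite nth_uniq ?size_s // => /eqP; exact: val_inj.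
exists (perm inj_f); apply: (@eq_from_nth _ 0); rewrite size_perm_seq ?size_s // => i lt_i.
by rewrite (nth_perm_seq _ (Ordinal lt_i)) permE.
Qed.

Lemma avoids321_perm_seq p : avoids321 p <-> avoids321_seq (perm_seq p).
Proof.
rewrite /avoids321_seq size_perm_seq; split=> [avoid_p a b c lt_ab lt_bc lt_c | avoid_s].
  have lt_b := ltn_trans lt_bc lt_c; have lt_a := ltn_trans lt_ab lt_b.
  have := forallP (forallP (forallP avoid_p (Ordinal lt_a)) (Ordinal lt_b)) (Ordinal lt_c).
  by rewrite /= lt_ab lt_bc -!(nth_perm_seq p).
apply/forallP => a; apply/forallP => b; apply/forallP => c; apply/implyP => /andP[lt_ab lt_bc].
by rewrite -!nth_perm_seq avoid_s.
Qed.

Lemma wexc_perm_seq p i : wexc p i = nth false (wexc_flags [::] (perm_seq p)) i.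
Proof.
rewrite nth_wexc_flags size_perm_seq add0n.
apply/existsP/andP => [[j /andP[/eqP <- le_j]] | [lt_i le_i]].
  by rewrite nth_perm_seq ltn_ord.
by exists (Ordinal lt_i); rewrite eqxx -(nth_perm_seq p (Ordinal lt_i)).
Qed.

Lemma wexc_pairs_flags p : wexc_pairs p = true_pairs (wexc_flags [::] (perm_seq p)).
Proof.
rewrite true_pairs_iota size_wexc_flags size_perm_seq.
by apply: eq_count => i; rewrite !wexc_perm_seq.
Qed.

Lemma wexc_ends_flags p : wexc_ends p = true_ends (wexc_flags [::] (perm_seq p)).
Proof.
rewrite true_ends_iota size_wexc_flags size_perm_seq.
by apply: eq_count => i; rewrite !wexc_perm_seq.
Qed.

End PermSeq.

Theorem mainTheorem10 (n : nat) (hn : 1 <= n) :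
  exists phi : ptree -> 'S_n,
    (forall t, edges t = n -> avoids321 (phi t)) /\
    (forall t1 t2, edges t1 = n -> edges t2 = n -> phi t1 = phi t2 -> t1 = t2) /\
    (forall p : 'S_n, avoids321 p -> exists t, edges t = n /\ phi t = p) /\
    (forall t, edges t = n ->
       young_leaves t = wexc_pairs (phi t) /\ old_leaves t = wexc_ends (phi t)).
Proof.
pose phi t : 'S_n := odflt 1%g [pick p | perm_seq p == seq_of_tree t].
have phiE t : edges t = n -> perm_seq (phi t) = seq_of_tree t.
  move=> edges_t; rewrite /phi; case: pickP => [p /eqP //| none].
  have [uniq_s lt_s _ _ _] := seq_of_tree_spec t; rewrite edges_t in lt_s.
  have [p eq_p] := perm_seq_onto uniq_s (etrans (size_seq_of_tree t) edges_t) lt_s.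
  by have := none p; rewrite eq_p eqxx.
exists phi; split; [|split; [|split]].
- by move=> t /phiE eq_t; apply/avoids321_perm_seq; rewrite eq_t; apply: seq_of_tree_avoids321.
- move=> t1 t2 /phiE eq_1 /phiE eq_2 eq_phi.
  by apply: seq_of_tree_inj; rewrite -eq_1 -eq_2 eq_phi.
- move=> p /avoids321_perm_seq avoid_p.
  have lt_p : all (fun x => x < size (perm_seq p)) (perm_seq p).
    by rewrite size_perm_seq perm_seq_lt.
  have [t eq_t] := seq_of_tree_onto (perm_seq_uniq p) lt_p avoid_p.
  have edges_t : edges t = n by rewrite -size_seq_of_tree eq_t size_perm_seq.
  by exists t; split=> //; apply: perm_seq_inj; rewrite phiE.
move=> t /phiE eq_t; have [_ _ _ flags_t _] := seq_of_tree_spec t.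
by rewrite wexc_pairs_flags wexc_ends_flags eq_t flags_t; have [-> ->] := leaf_stats t.
Qed.
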